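(* Let $G$ be the final graph of the uncoordinated construction (described in the context) on a set $P\subset\mathbb{R}^d$ of $n$ points with parameter $s>1$, and let $\alpha$ be the aspect ratio of $P$. Then the total Euclidean length of the edges of $G$ is $O(\lg\alpha\cdot|\mathrm{MST}|\cdot s^{d+1})$, where $|\mathrm{MST}|$ is the total length of a Euclidean minimum spanning tree of $P$ and the implied constant depends only on $d$.
   Context: Fix $d\ge 1$; $|xy|$ is Euclidean distance; $\lg$ is logarithm base 2. The aspect ratio is $\alpha=\max_{u,v\in P}|uv|/\min_{u\ne v\in P}|uv|$. Uncoordinated construction: start with the graph $G$ on vertex set $P$ with no edges. Every ordered pair $(p,q)$ of distinct points of $P$ is processed exactly once, in an arbitrary order, one at a time. When $(p,q)$ is processed, the edge $pq$ is added to $G$ unless $G$ currently contains an edge whose endpoints can be labeled $p',q'$ with $|pp'|\le |p'q'|/(2s+2)$ and $|qq'|\le |p'q'|/(2s+2)$. $G$ is the graph after all pairs are processed. *)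

From HB Require Import structures.
From mathcomp Require Import all_boot all_order all_algebra.
From mathcomp Require Import reals exp.
Set Implicit Arguments. Unset Strict Implicit. Unset Printing Implicit Defensive.
Import Order.TTheory GRing.Theory Num.Theory.
Local Open Scope ring_scope.

Section Defs.
Variables (R : realType) (d n : nat).
Implicit Types (p : 'I_n -> 'rV[R]_d).

Definition edist (x y : 'rV[R]_d) : R :=
  Num.sqrt (\sum_(k < d) (x 0 k - y 0 k) ^+ 2).

Definition lg (x : R) : R := ln x / ln 2.

Definition diameter p : R :=
  \big[Num.max/0]_(i < n) \big[Num.max/0]_(j < n) edist (p i) (p j).

(* min_{u <> v} |uv|  (meaningful when n >= 2) *)
Definition min_dist p : R :=
  \big[Num.min/diameter p]_(i < n) \big[Num.min/diameter p]_(j < n | j != i)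
     edist (p i) (p j).

Definition aspect_ratio p : R := diameter p / min_dist p.

(* The test performed when the ordered pair (i,j) is processed: G (a set of
   edges, each stored as the ordered pair it was added as) contains an edge
   {a,b} whose endpoints can be labeled p',q' with
   |p p'| <= |p'q'|/(2s+2) and |q q'| <= |p'q'|/(2s+2). *)
Definition covered p (s : R) (E : {set 'I_n * 'I_n}) (i j : 'I_n) : bool :=
  [exists e in E,
     let a := e.1 in let b := e.2 in
     let r := edist (p a) (p b) / (2 * s + 2) in
     ((edist (p i) (p a) <= r) && (edist (p j) (p b) <= r)) ||
     ((edist (p i) (p b) <= r) && (edist (p j) (p a) <= r))].

Definition process p (s : R) (E : {set 'I_n * 'I_n}) (e : 'I_n * 'I_n) :=
  if covered p s E e.1 e.2 then E else e |: E.

Definition uncoord_graph p (s : R) (ord : seq ('I_n * 'I_n)) :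
  {set 'I_n * 'I_n} := foldl (process p s) set0 ord.

Definition graph_length p (E : {set 'I_n * 'I_n}) : R :=
  \sum_(e in E) edist (p e.1) (p e.2).

Definition tree_rel (T : {set {set 'I_n}}) : rel 'I_n :=
  fun u v => [set u; v] \in T.

Definition is_spanning_tree (T : {set {set 'I_n}}) : Prop :=
  [/\ forall f, f \in T -> #|f| = 2%N,
      forall u v : 'I_n, connect (tree_rel T) u v
    & #|T| = n.-1].

Definition tree_length p (T : {set {set 'I_n}}) : R :=
  \sum_(f in T) \sum_(u in f) \sum_(v in f | (u < v)%N) edist (p u) (p v).

Definition is_EMST p (T : {set {set 'I_n}}) : Prop :=
  is_spanning_tree T /\
  forall T', is_spanning_tree T' -> tree_length p T <= tree_length p T'.

End Defs.

(* Split the edges of G into O(lg alpha) dyadic classes of lengths in (L, 2L].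
   For one class take a maximal rho-separated net S with rho = L / (4s + 4) and
   encode an edge by the net points near its endpoints.  Two edges with the
   same code would each cover the other, which is impossible since every edge
   is added only if no earlier edge covers it; and the second net point lies
   within 3L of the first, a ball holding O(s)^d net points by a grid argument.
   So a class has at most |S| O(s)^d edges.  Finally |S| rho <= 4 |MST|: the
   function min(rho/2, |u .|) rises by rho/2 along the tree path from u to any
   other net point, while a tree edge xy changes it by at most |xy|, and does so
   only for the at most two net points u within rho/2 of x or y. *)

From HB Require Import structures.
From mathcomp Require Import all_boot all_order all_algebra.
From mathcomp Require Import reals exp.
From mathcomp Require Import ring lra zify.
Import Order.TTheory GRing.Theory Num.Theory.
Local Open Scope ring_scope.
Set Implicit Arguments. Unset Strict Implicit. Unset Printing Implicit Defensive.

Section Euclidean.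
Variables (R : realType) (d : nat).
Implicit Types (a b : 'I_d -> R) (x y z : 'rV[R]_d).

Lemma cauchy_schwarz a b :
  (\sum_k a k * b k) ^+ 2 <= (\sum_k a k ^+ 2) * (\sum_k b k ^+ 2).
Proof.
set A := \sum_k a k ^+ 2; set B := \sum_k b k ^+ 2; set c := \sum_k a k * b k.
have A_ge0 : 0 <= A by apply: sumr_ge0 => k _; exact: sqr_ge0.
have [A0|A_neq0] := eqVneq A 0.
  have a0 k : a k = 0.
    apply/eqP; rewrite -sqrf_eq0; apply/eqP.
    exact: (psumr_eq0P (fun i _ => sqr_ge0 (a i)) A0).
  by rewrite /c big1 ?expr0n ?A0 ?mul0r // => k _; rewrite a0 mul0r.
have A_gt0 : 0 < A by rewrite lt_def A_neq0 A_ge0.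
have expand : \sum_k (A * b k - c * a k) ^+ 2 = A * (A * B - c ^+ 2).
  rewrite (eq_bigr (fun k => A ^+ 2 * b k ^+ 2 +
      (- (2 * A * c) * (a k * b k) + c ^+ 2 * a k ^+ 2))); last by move=> k _; ring.
  by rewrite !big_split /= -!mulr_sumr -/A -/B -/c; ring.
have : 0 <= A * (A * B - c ^+ 2).
  by rewrite -expand; apply: sumr_ge0 => k _; exact: sqr_ge0.
by rewrite pmulr_rge0 // subr_ge0.
Qed.

Lemma edist_ge0 x y : 0 <= edist x y.
Proof. exact: sqrtr_ge0. Qed.

Lemma edistC x y : edist x y = edist y x.
Proof. by congr Num.sqrt; apply: eq_bigr => k _; rewrite -sqrrN opprB. Qed.

Lemma edistxx x : edist x x = 0.
Proof. by rewrite /edist big1 ?sqrtr0 // => k _; rewrite subrr expr0n. Qed.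

Lemma edist_eq0 x y : (edist x y == 0) = (x == y).
Proof.
apply/eqP/eqP => [|->]; last exact: edistxx.
move/eqP; rewrite sqrtr_eq0 => le0.
have sum0 : \sum_k (x 0 k - y 0 k) ^+ 2 = 0.
  by apply/eqP; rewrite eq_le le0 sumr_ge0 // => k _; exact: sqr_ge0.
apply/rowP => k; apply/eqP; rewrite -subr_eq0 -sqrf_eq0; apply/eqP.
exact: (psumr_eq0P (fun i _ => sqr_ge0 (x 0 i - y 0 i)) sum0).
Qed.

Lemma ler_coord_edist x y k : `|x 0 k - y 0 k| <= edist x y.
Proof.
rewrite -sqrtr_sqr /edist ler_wsqrtr // (bigD1 k) //= lerDl.
by apply: sumr_ge0 => i _; exact: sqr_ge0.
Qed.

Lemma edist_triangle x y z : edist x z <= edist x y + edist y z.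
Proof.
pose a k := x 0 k - y 0 k; pose b k := y 0 k - z 0 k.
set A := \sum_k a k ^+ 2; set B := \sum_k b k ^+ 2; set c := \sum_k a k * b k.
have A_ge0 : 0 <= A by apply: sumr_ge0 => k _; exact: sqr_ge0.
have B_ge0 : 0 <= B by apply: sumr_ge0 => k _; exact: sqr_ge0.
have sum_sqr : \sum_k (x 0 k - z 0 k) ^+ 2 = A + B + 2 * c.
  rewrite (eq_bigr (fun k => a k ^+ 2 + (b k ^+ 2 + 2 * (a k * b k)))).
    by rewrite !big_split /= -mulr_sumr addrA.
  by move=> k _; rewrite /a /b; ring.
have c_le : c <= Num.sqrt A * Num.sqrt B.
  rewrite -sqrtrM // (le_trans (ler_norm c)) // -sqrtr_sqr ler_wsqrtr //.
  exact: cauchy_schwarz.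
rewrite /edist sum_sqr -/A -/B.
have sA := sqrtr_ge0 A; have sB := sqrtr_ge0 B.
rewrite -(ger0_norm (addr_ge0 sA sB)) -sqrtr_sqr ler_wsqrtr // sqrrD !sqr_sqrtr //.
lra.
Qed.

Lemma edist_le_coord x y (h : R) : 0 <= h ->
  (forall k, `|x 0 k - y 0 k| <= h) -> edist x y <= d.+1%:R * h.
Proof.
move=> h_ge0 xy_h; rewrite -[_ * h]ger0_norm ?mulr_ge0 // -sqrtr_sqr ler_wsqrtr //.
apply: le_trans (_ : \sum_(k < d) h ^+ 2 <= _).
  by apply: ler_sum => k _; rewrite -real_normK ?num_real // lerXn2r ?nnegrE.
rewrite sumr_const card_ord exprMn mulrC -[h ^+ 2 *+ d]mulr_natr.
by apply: ler_wpM2l; rewrite ?sqr_ge0 // -natrX ler_nat; lia.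
Qed.

End Euclidean.

Section Construction.
Variables (R : realType) (d n : nat) (p : 'I_n -> 'rV[R]_d) (s : R).
Local Notation dist i j := (edist (p i) (p j)).
Local Notation len e := (dist e.1 e.2).

Definition covers (e : 'I_n * 'I_n) (i j : 'I_n) : bool :=
  let r := len e / (2 * s + 2) in
  ((dist i e.1 <= r) && (dist j e.2 <= r)) ||
  ((dist i e.2 <= r) && (dist j e.1 <= r)).

Lemma coveredE E i j : covered p s E i j = [exists e in E, covers e i j].
Proof. by []. Qed.

Definition not_mutually_covering (E : {set 'I_n * 'I_n}) : Prop :=
  forall e f, e \in E -> f \in E -> e != f ->
    ~~ (covers e f.1 f.2 && covers f e.1 e.2).

Lemma process_not_mutually_covering E x :
  not_mutually_covering E -> not_mutually_covering (process p s E x).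
Proof.
rewrite /process; case: ifP => // /negbT.
rewrite coveredE negb_exists => /forallP x_unc E_nmc.
have unc e : e \in E -> ~~ covers e x.1 x.2 by move=> eE; move: (x_unc e); rewrite eE.
move=> e f; rewrite !in_setU1 => /orP[/eqP->|eE] /orP[/eqP->|fE].
- by rewrite eqxx.
- by rewrite (negbTE (unc f fE)) andbF.
- by rewrite (negbTE (unc e eE)).
- exact: E_nmc.
Qed.

Lemma uncoord_graph_not_mutually_covering ord :
  not_mutually_covering (uncoord_graph p s ord).
Proof.
rewrite /uncoord_graph; have : not_mutually_covering set0 by move=> e f; rewrite in_set0.
elim: ord set0 => //= x ord IH E E_nmc.
by apply: IH; exact: process_not_mutually_covering.
Qed.

Lemma uncoord_graph_subset ord : {subset uncoord_graph p s ord <= ord}.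
Proof.
move=> e; rewrite /uncoord_graph.
suff : forall E, e \in foldl (process p s) E ord -> (e \in E) || (e \in ord).
  by move=> sub /sub; rewrite in_set0.
elim: ord => [|x ord IH] E /=; first by rewrite orbF.
move=> /IH /orP[|e_ord]; last by rewrite in_cons e_ord !orbT.
rewrite /process; case: ifP => [_ ->//|_]; rewrite in_setU1 => /orP[/eqP->|->//].
by rewrite in_cons eqxx orbT.
Qed.

Lemma uncoord_graph_edges_apart ord e f r : 0 < s ->
  e \in uncoord_graph p s ord -> f \in uncoord_graph p s ord ->
  (2 * s + 2) * r <= len e -> (2 * s + 2) * r <= len f ->
  dist e.1 f.1 <= r -> dist e.2 f.2 <= r -> e = f.
Proof.
move=> s_gt0 eG fG re rf d1 d2.
have r_le g : (2 * s + 2) * r <= len g -> r <= len g / (2 * s + 2).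
  by rewrite ler_pdivlMr 1?mulrC //; lra.
have cef : covers e f.1 f.2.
  rewrite /covers (edistC (p f.1)) (edistC (p f.2)).
  by rewrite (le_trans d1 (r_le e re)) (le_trans d2 (r_le e re)).
have cfe : covers f e.1 e.2.
  by rewrite /covers (le_trans d1 (r_le f rf)) (le_trans d2 (r_le f rf)).
apply/eqP; apply: contraT => /(uncoord_graph_not_mutually_covering eG fG).
by rewrite cef cfe.
Qed.

End Construction.


Section NetVersusTree.
Variables (R : realType) (d n : nat) (p : 'I_n -> 'rV[R]_d).
Local Notation dist i j := (edist (p i) (p j)).

Definition pair_sum (w : 'I_n -> 'I_n -> R) (f : {set 'I_n}) : R :=
  \sum_(u in f) \sum_(v in f | (u < v)%N) w u v.

Lemma pair_sum2 w x y : (forall u v, w u v = w v u) -> x != y ->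
  pair_sum w [set x; y] = w x y.
Proof.
move=> wC xy; have xNy : x \notin [set y] by rewrite in_set1.
rewrite /pair_sum big_setU1 //= big_set1 !big_mkcondr /= !big_setU1 //= !big_set1.
rewrite !ltnn !addr0 add0r; case: (ltngtP x y) => [_|_|xy_val].
- by rewrite addr0.
- by rewrite add0r wC.
- by move: xy; rewrite (val_inj xy_val) eqxx.
Qed.

Lemma tree_lengthE T : tree_length p T = \sum_(f in T) pair_sum (fun u v => dist u v) f.
Proof. by []. Qed.

Variable rho : R.
Hypothesis rho_gt0 : 0 < rho.

Definition capped_dist (u x : 'I_n) : R := Num.min (rho / 2) (dist u x).

Definition variation (u : 'I_n) (f : {set 'I_n}) : R :=
  pair_sum (fun a b => `|capped_dist u a - capped_dist u b|) f.

Lemma variation2 u x y : x != y ->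
  variation u [set x; y] = `|capped_dist u x - capped_dist u y|.
Proof. by move=> xy; rewrite /variation pair_sum2 // => a b; rewrite distrC. Qed.

Lemma capped_dist_lipschitz u a b : `|capped_dist u a - capped_dist u b| <= dist a b.
Proof.
have t1 := edist_triangle (p u) (p a) (p b); have ab_ge0 := edist_ge0 (p a) (p b).
have t2 := edist_triangle (p u) (p b) (p a); rewrite (edistC (p b)) in t2.
rewrite /capped_dist /Num.min ler_norml.
by case: (ltP _ (dist u a)); case: (ltP _ (dist u b)) => ? ?; apply/andP; split; lra.
Qed.

Lemma capped_dist_path_le u (A : {set {set 'I_n}}) x q :
  uniq (x :: q) -> path (fun a b => [set a; b] \in A) x q ->
  `|capped_dist u (last x q) - capped_dist u x| <= \sum_(f in A) variation u f.
Proof.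
elim: q x A => [|y q IH] x A /=.
  by move=> _ _; rewrite subrr normr0; do 3 apply: sumr_ge0 => ? _; exact: normr_ge0.
move=> /andP[xNq q_uniq] /andP[xyA q_path].
have xy : x != y by apply: contraNneq xNq => ->; rewrite in_cons eqxx.
rewrite (bigD1 [set x; y]) //= variation2 //.
set A' := A :\ [set x; y].
have q_path' : path (fun a b => [set a; b] \in A') y q.
  apply: (sub_in_path (P := mem (y :: q))) _ _ q_path; last by apply/allP.
  move=> a b aq bq /= abA; rewrite in_setD1 abA andbT.
  apply: contraNneq xNq => ab_xy; have : x \in [set a; b] by rewrite ab_xy set21.
  by rewrite in_set2 => /orP[]/eqP->.
have := IH y A' q_uniq q_path'.
rewrite (eq_bigl (fun f => (f \in A) && (f != [set x; y]))) => [rest|f]; last first.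
  by rewrite in_setD1 andbC.
apply: le_trans (lerD (lexx _) rest); rewrite distrC.
have -> : capped_dist u x - capped_dist u (last y q) =
  (capped_dist u x - capped_dist u y) +
  (capped_dist u y - capped_dist u (last y q)) by ring.
by rewrite (distrC (capped_dist u (last y q))) ler_normD.
Qed.

Variable S : {set 'I_n}.
Hypothesis S_sep : forall u v, u \in S -> v \in S -> u != v -> rho < dist u v.

Lemma sum_near_net_le1 x : \sum_(u in S) (if dist u x < rho / 2 then 1 else 0 : R) <= 1.
Proof.
case: (pickP [pred u | (u \in S) && (dist u x < rho / 2)]) => [u0 /andP[u0S u0x]|none].
  rewrite (bigD1 u0) //= u0x big1 ?addr0 // => u /andP[uS uNu0]; case: ifP => // ux.
  have := S_sep uS u0S uNu0; have := edist_triangle (p u) (p x) (p u0).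
  by rewrite (edistC (p x)); lra.
by rewrite big1 ?ler01 // => u uS; move: (none u); rewrite /= uS /= => ->.
Qed.

Lemma sum_variation_edge_le x y : x != y ->
  \sum_(u in S) variation u [set x; y] <= 2 * dist x y.
Proof.
move=> xy; under eq_bigr do rewrite variation2 //.
pose near u z : R := if dist u z < rho / 2 then 1 else 0.
apply: le_trans (_ : \sum_(u in S) (near u x + near u y) * dist x y <= _).
  apply: ler_sum => u _; rewrite /near.
  have := capped_dist_lipschitz u x y; have := edist_ge0 (p x) (p y).
  case: ifP => ux; case: ifP => uy; try lra.
  have far z : ~~ (dist u z < rho / 2) -> capped_dist u z = rho / 2.
    rewrite -leNgt => uz; rewrite /capped_dist /Num.min.
    by case: ltP => // zu; apply/eqP; rewrite eq_le zu uz.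
  by rewrite !far ?ux ?uy // subrr normr0 addr0 mul0r.
rewrite -mulr_suml big_split /=.
have := sum_near_net_le1 x; have := sum_near_net_le1 y.
by have := edist_ge0 (p x) (p y); nra.
Qed.

Variable T : {set {set 'I_n}}.
Hypotheses (T_edges : forall f, f \in T -> #|f| = 2%N)
  (T_connected : forall u v, connect (tree_rel T) u v).

(* [capped_dist u] climbs from 0 at [u] to [rho / 2] at any other net point. *)
Lemma variation_tree_ge u : u \in S -> (1 < #|S|)%N ->
  rho / 2 <= \sum_(f in T) variation u f.
Proof.
move=> uS S_gt1.
have : (0 < #|S :\ u|)%N by move: S_gt1; rewrite (cardsD1 u S) uS.
case/card_gt0P => v; rewrite in_setD1 => /andP[vNu vS].
have /connectP [q uv_path v_last] := T_connected u v.
case: (shortenP uv_path) v_last => q' uv_path' q'_uniq _ v_last.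
have := capped_dist_path_le u q'_uniq uv_path'; rewrite -v_last.
have rho2_gt0 : 0 < rho / 2 by rewrite divr_gt0.
have -> : capped_dist u u = 0 by rewrite /capped_dist edistxx /Num.min ltNge ltW.
have -> : capped_dist u v = rho / 2.
  have uNv : u != v by rewrite eq_sym.
  have := S_sep uS vS uNv; rewrite /capped_dist /Num.min => uv.
  case: ltP => // vu; suff : rho < rho / 2 by lra.
  exact: lt_le_trans uv vu.
by rewrite subr0 ger0_norm // ltW.
Qed.

Lemma net_card_le_tree_length : (1 < #|S|)%N -> #|S|%:R * rho <= 4 * tree_length p T.
Proof.
move=> S_gt1.
have lower : \sum_(u in S) (rho / 2) <= \sum_(f in T) \sum_(u in S) variation u f.
  by rewrite exchange_big ler_sum // => u uS; exact: variation_tree_ge.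
have upper : \sum_(f in T) \sum_(u in S) variation u f <= 2 * tree_length p T.
  rewrite tree_lengthE mulr_sumr ler_sum // => f /T_edges/eqP/cards2P [x [y [xy ->]]].
  by rewrite pair_sum2 ?sum_variation_edge_le // => a b; rewrite edistC.
by move: lower upper; rewrite sumr_const -mulr_natr; lra.
Qed.

End NetVersusTree.


Section Packing.
Variables (R : realType) (d n : nat) (p : 'I_n -> 'rV[R]_d).
Local Notation dist i j := (edist (p i) (p j)).

Lemma exists_net (rho : R) : 0 <= rho ->
  exists S : {set 'I_n}, exists sigma : 'I_n -> 'I_n,
    [/\ forall u v, u \in S -> v \in S -> u != v -> rho < dist u v,
        forall i, sigma i \in S
      & forall i, dist i (sigma i) <= rho].
Proof.
move=> rho_ge0.
pose separated (A : {set 'I_n}) :=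
  [forall u in A, forall v in A, (u != v) ==> (rho < dist u v)].
have sep0 : separated set0 by apply/forall_inP => u; rewrite in_set0.
case: (arg_maxnP (fun A : {set 'I_n} => #|A|) sep0) => S sepS S_max.
have S_sep u v : u \in S -> v \in S -> u != v -> rho < dist u v.
  by move=> uS vS uv; move/forall_inP: sepS => /(_ u uS)/forall_inP/(_ v vS); rewrite uv.
have S_covers i : exists2 u, u \in S & dist i u <= rho.
  apply/exists_inP; apply: contraT; rewrite negb_exists_in => /forall_inP far.
  have far_i u : u \in S -> rho < dist i u by move=> uS; rewrite ltNge far.
  have iNS : i \notin S by apply: contraT => /negPn/far_i; rewrite edistxx ltNge rho_ge0.
  have /S_max : separated (i |: S).
    apply/forall_inP => u; rewrite in_setU1 => /orP[/eqP->|uS];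
      apply/forall_inP => v; rewrite in_setU1 => /orP[/eqP->|vS]; apply/implyP => uv.
    - by rewrite eqxx in uv.
    - exact: far_i.
    - by rewrite edistC; exact: far_i.
    - exact: S_sep.
  by rewrite cardsU1 iNS; lia.
have [sigma sigmaS sigma_close] := fin_all_exists2 S_covers.
by exists S, sigma.
Qed.

Variables (rho r : R) (c : 'rV[R]_d).
Hypotheses (rho_gt0 : 0 < rho) (r_ge0 : 0 <= r).

Definition grid_step : R := rho / d.+1%:R.

Definition grid_size : nat := (Num.truncn (2 * r / grid_step)).+1.

(* The cube of side [2 r] around [c], cut into cells of side [grid_step]. *)
Definition grid_cell (x : 'rV[R]_d) : {ffun 'I_d -> 'I_grid_size} :=
  [ffun k => inord (Num.truncn ((x 0 k - c 0 k + r) / grid_step))].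

Lemma grid_step_gt0 : 0 < grid_step.
Proof. by rewrite divr_gt0. Qed.

Lemma grid_cell_coord_le x y : edist c x <= r -> edist c y <= r ->
  grid_cell x = grid_cell y -> forall k, `|x 0 k - y 0 k| <= grid_step.
Proof.
move=> cx cy xy k; have h_gt0 := grid_step_gt0.
pose a (z : 'rV[R]_d) := (z 0 k - c 0 k + r) / grid_step.
have a_itv z : edist c z <= r -> 0 <= a z <= 2 * r / grid_step.
  move=> cz; have := ler_coord_edist z c k; rewrite edistC ler_norml => /andP[zk1 zk2].
  by rewrite divr_ge0 ?ler_pM2r ?invr_gt0 ?(ltW h_gt0) //; lra.
have trunc_lt w : edist c w <= r -> (Num.truncn (a w) < grid_size)%N.
  move=> /a_itv/andP[_ az]; rewrite ltnS truncn_le_nat.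
  exact: le_lt_trans az (truncnS_gt _).
have := congr1 (fun f : {ffun 'I_d -> 'I_grid_size} => val (f k)) xy.
rewrite /= !ffunE !inordK ?trunc_lt // -/(a x) -/(a y) => txy.
have /andP[ax0 _] := a_itv x cx; have /andP[ay0 _] := a_itv y cy.
move: (truncn_itv ax0) (truncn_itv ay0); rewrite txy => /andP[x1 x2] /andP[y1 y2].
have a_close : `|a x - a y| <= 1 by rewrite ler_norml; apply/andP; split; lra.
have -> : x 0 k - y 0 k = (a x - a y) * grid_step.
  by rewrite /a -mulrBl divfK ?gt_eqF //; ring.
by rewrite normrM (gtr0_norm h_gt0) ler_piMl ?(ltW h_gt0).
Qed.

Variable S : {set 'I_n}.
Hypothesis S_sep : forall u v, u \in S -> v \in S -> u != v -> rho < dist u v.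

Lemma grid_cell_inj :
  {in [set u in S | edist c (p u) <= r] &, injective (fun u => grid_cell (p u))}.
Proof.
move=> u v; rewrite !inE => /andP[uS cu] /andP[vS cv].
move=> /(grid_cell_coord_le cu cv) uv_close.
have uv_le : edist (p u) (p v) <= rho.
  have := edist_le_coord (ltW grid_step_gt0) uv_close.
  by rewrite /grid_step mulrC divfK ?pnatr_eq0.
by apply/eqP; apply: contraTT uv_le => /(S_sep uS vS); rewrite -ltNge.
Qed.

Lemma grid_size_le : (grid_size%:R : R) <= 2 * (r / rho) * d.+1%:R + 1.
Proof.
have r_h : 2 * r / grid_step = 2 * (r / rho) * d.+1%:R.
  by rewrite /grid_step invf_div; ring.
rewrite /grid_size -natr1 -r_h lerD2r truncn_le.
by apply: divr_ge0; [exact: mulr_ge0 | exact: ltW grid_step_gt0].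
Qed.

End Packing.


Definition class_const (d : nat) : nat := (49 * d.+1)%N.

Section LengthClass.
Variables (R : realType) (d n : nat) (p : 'I_n -> 'rV[R]_d) (s : R)
  (ord : seq ('I_n * 'I_n)) (T : {set {set 'I_n}}).
Hypotheses (s_gt1 : 1 < s) (T_edges : forall f, f \in T -> #|f| = 2%N)
  (T_connected : forall u v, connect (tree_rel T) u v).
Local Notation dist i j := (edist (p i) (p j)).
Local Notation G := (uncoord_graph p s ord).
Local Notation len e := (dist e.1 e.2).

Definition length_class (L : R) : {set 'I_n * 'I_n} :=
  [set e in G | (L < len e) && (len e <= 2 * L)].

Lemma tree_length_ge0 : 0 <= tree_length p T.
Proof. by do 3 apply: sumr_ge0 => ? _; exact: edist_ge0. Qed.

Section NetOfClass.
Variables (L : R) (S : {set 'I_n}) (sigma : 'I_n -> 'I_n).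
Local Notation rho := (L / (4 * s + 4)).
Hypotheses (L_gt0 : 0 < L)
  (S_sep : forall u v, u \in S -> v \in S -> u != v -> rho < dist u v)
  (sigmaS : forall i, sigma i \in S) (sigma_close : forall i, dist i (sigma i) <= rho).

Lemma rho_gt0 : 0 < rho.
Proof. by apply: divr_gt0 => //; move: s_gt1; lra. Qed.

Lemma rho_mul : rho * (4 * s + 4) = L.
Proof. by rewrite divfK // gt_eqF //; move: s_gt1; lra. Qed.

Lemma length_class_net_ball e : e \in length_class L ->
  sigma e.2 \in [set u in S | edist (p (sigma e.1)) (p u) <= 3 * L].
Proof.
rewrite !inE sigmaS => /and3P[_ _ e_le] /=.
have c1 := sigma_close e.1; rewrite edistC in c1; have c2 := sigma_close e.2.
have := edist_triangle (p (sigma e.1)) (p e.1) (p (sigma e.2)).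
have := edist_triangle (p e.1) (p e.2) (p (sigma e.2)).
have := rho_mul; have := rho_gt0; move: s_gt1 L_gt0; nra.
Qed.

Lemma length_class_code_inj :
  {in length_class L &, injective (fun e =>
     (sigma e.1, grid_cell rho (3 * L) (p (sigma e.1)) (p (sigma e.2))))}.
Proof.
move=> e f eC fC [sigma1 cell2].
have sigma2 : sigma e.2 = sigma f.2.
  have fB := length_class_net_ball fC; rewrite -sigma1 in cell2 fB.
  exact: (grid_cell_inj rho_gt0 S_sep (length_class_net_ball eC) fB cell2).
have close g h : sigma g = sigma h -> dist g h <= 2 * rho.
  move=> gh; have cg := sigma_close g; have ch := sigma_close h; rewrite -gh edistC in ch.
  by have := edist_triangle (p g) (p (sigma g)) (p h); lra.
move: eC fC; rewrite !inE => /and3P[eG e_gt _] /and3P[fG f_gt _].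
have two_rho : (2 * s + 2) * (2 * rho) = L by have := rho_mul; nra.
apply: (uncoord_graph_edges_apart (r := 2 * rho) _ eG fG).
- by move: s_gt1; lra.
- by rewrite two_rho ltW.
- by rewrite two_rho ltW.
- exact: close.
- exact: close.
Qed.

Lemma card_length_class_le :
  (#|length_class L| <= #|S| * grid_size d rho (3 * L) ^ d)%N.
Proof.
rewrite -(card_in_imset length_class_code_inj).
set M := grid_size d rho (3 * L).
apply: leq_trans (_ : #|setX S [set: {ffun 'I_d -> 'I_M}]| <= _)%N.
  apply: subset_leq_card; apply/subsetP => _ /imsetP [e _ ->].
  by rewrite in_setX in_setT sigmaS.
by rewrite cardsX cardsT card_ffun !card_ord.
Qed.

Lemma length_class_net_gt1 : length_class L != set0 -> (1 < #|S|)%N.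
Proof.
case/set0Pn => e; rewrite inE => /and3P[_ e_gt _].
apply/card_gt1P; exists (sigma e.1), (sigma e.2); rewrite !sigmaS; split=> //.
apply: contraTneq e_gt => same; rewrite -leNgt.
have c1 := sigma_close e.1; have c2 := sigma_close e.2; rewrite same in c1.
have := edist_triangle (p e.1) (p (sigma e.2)) (p e.2); rewrite (edistC (p (sigma e.2))).
have := rho_mul; have := rho_gt0; by move: s_gt1 L_gt0; nra.
Qed.

End NetOfClass.

Lemma grid_size_length_class_le L : 0 < L ->
  ((grid_size d (L / (4 * s + 4)) (3 * L))%:R : R) <= (class_const d)%:R * s.
Proof.
move=> L_gt0; apply: le_trans (grid_size_le d (rho_gt0 L_gt0) _) _; first lra.
have -> : 3 * L / (L / (4 * s + 4)) = 12 * s + 12.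
  by field; rewrite !gt_eqF //; move: s_gt1; lra.
rewrite /class_const natrM.
have d1_ge1 : (1 : R) <= d.+1%:R by rewrite ler1n.
by move: s_gt1; nra.
Qed.

Lemma length_class_le L : 0 < L ->
  \sum_(e in length_class L) len e
    <= (64 * class_const d ^ d)%:R * tree_length p T * s ^+ d.+1.
Proof.
move=> L_gt0; set rho := L / (4 * s + 4).
have s_gt0 : 0 < s by move: s_gt1; lra.
have bound_ge0 : 0 <= (64 * class_const d ^ d)%:R * tree_length p T * s ^+ d.+1.
  by rewrite !mulr_ge0 ?tree_length_ge0 // exprn_ge0 // ltW.
have [S [sigma [S_sep sigmaS sigma_close]]] := exists_net p (ltW (rho_gt0 L_gt0)).
have [->|C_neq0] := eqVneq (length_class L) set0; first by rewrite big_set0.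
set M := grid_size d rho (3 * L).
have sum_le : \sum_(e in length_class L) len e <= #|S|%:R * M%:R ^+ d * (2 * L).
  apply: le_trans (_ : \sum_(e in length_class L) 2 * L <= _).
    by apply: ler_sum => e; rewrite inE => /and3P[].
  rewrite sumr_const -[2 * L *+ _]mulr_natl; apply: ler_wpM2r; first by lra.
  by rewrite -natrX -natrM ler_nat (card_length_class_le L_gt0 S_sep sigmaS sigma_close).
have S_L : #|S|%:R * L <= 32 * s * tree_length p T.
  have S_rho := net_card_le_tree_length (rho_gt0 L_gt0) S_sep T_edges T_connected
    (length_class_net_gt1 L_gt0 sigmaS sigma_close C_neq0).
  rewrite -(rho_mul L) mulrA; apply: le_trans (ler_wpM2r _ S_rho) _; first lra.
  by have := tree_length_ge0; move: s_gt1; nra.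
have M_le : M%:R ^+ d <= (class_const d)%:R ^+ d * s ^+ d.
  rewrite -exprMn lerXn2r ?nnegrE ?grid_size_length_class_le //.
  by rewrite mulr_ge0 //; lra.
apply: le_trans sum_le _.
rewrite (_ : _ * _ * (2 * L) = 2 * M%:R ^+ d * (#|S|%:R * L)); last by ring.
apply: le_trans (ler_wpM2l _ S_L) _; first by rewrite mulr_ge0 // exprn_ge0.
have sT_ge0 := mulr_ge0 (ltW s_gt0) tree_length_ge0.
rewrite natrM natrX exprS; nra.
Qed.

End LengthClass.


Lemma sum_le_sum_cover (R : numDomainType) (I J : finType) (A : {set I})
    (B : J -> {set I}) (w : I -> R) :
  (forall i, 0 <= w i) -> (forall i, i \in A -> exists j, i \in B j) ->
  \sum_(i in A) w i <= \sum_j \sum_(i in B j) w i.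
Proof.
move=> w_ge0 A_cover; under [X in _ <= X]eq_bigr do rewrite big_mkcond.
rewrite exchange_big /= big_mkcond ler_sum // => i _.
case: ifP => [/A_cover [j iBj]|_]; last by rewrite sumr_ge0 // => j _; case: ifP.
rewrite (bigD1 j) //= iBj lerDl sumr_ge0 // => j' _; by case: ifP.
Qed.

Section Dyadic.
Variable R : realType.

Lemma exists_dyadic_index (y : R) : 1 <= y -> exists k, 2 ^+ k <= y < 2 ^+ k.+1.
Proof.
move=> y_ge1.
have y_lt : exists k, y < 2 ^+ k.+1.
  exists (Num.truncn y); apply: lt_le_trans (truncnS_gt y) _.
  by rewrite -natrX ler_nat ltnW // ltn_expl.
case: (ex_minnP y_lt) => k yk k_min; exists k; rewrite yk andbT.
case: k yk k_min => [|k] _ k_min; first by rewrite expr0.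
by rewrite leNgt; apply/negP => /k_min; rewrite ltnn.
Qed.

Lemma lg_ge_nat (y : R) k : 2 ^+ k <= y -> k%:R <= lg y.
Proof.
move=> ky; have ln2_gt0 : 0 < ln (2 : R) by rewrite ln_gt0 // ltr1n.
rewrite /lg ler_pdivlMr // mulr_natl -lnXn ?ltr0n // ler_ln ?posrE ?exprn_gt0 //.
exact: lt_le_trans (exprn_gt0 _ _) ky.
Qed.

Lemma exists_dyadic_class (D m x : R) k : 0 < m -> m <= x -> x <= D ->
  D / m < 2 ^+ k.+1 -> exists j : 'I_k.+1, D / 2 ^+ j.+1 < x <= 2 * (D / 2 ^+ j.+1).
Proof.
move=> m_gt0 mx xD Dm_lt; have x_gt0 := lt_le_trans m_gt0 mx.
have two_pow_gt0 j : 0 < (2 : R) ^+ j by rewrite exprn_gt0.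
have [|j /andP[jlo jhi]] := exists_dyadic_index (y := D / x).
  by rewrite ler_pdivlMr // mul1r.
have jk : (j < k.+1)%N.
  rewrite -(ltr_eXn2l (_ : 1 < 2 :> R)) ?ltr1n //; apply: le_lt_trans jlo _.
  apply: le_lt_trans Dm_lt; apply: ler_wpM2l; first exact: ltW (lt_le_trans x_gt0 xD).
  by rewrite lef_pV2 ?posrE.
exists (Ordinal jk) => /=; apply/andP; split.
  by rewrite ltr_pdivrMr // mulrC -ltr_pdivrMr.
have -> : 2 * (D / 2 ^+ j.+1) = D / 2 ^+ j.
  by rewrite exprS; field; rewrite ?expf_neq0 ?pnatr_eq0.
by rewrite ler_pdivlMr // mulrC -ler_pdivlMr.
Qed.

Lemma succ_le_twice_max (x : R) k : k%:R <= x -> k.+1%:R <= 2 * Num.max 1 x.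
Proof.
move=> kx; have := le_max 1 1 x; have := le_max x 1 x; rewrite !lexx orbT.
by rewrite -natr1; lra.
Qed.

End Dyadic.

Section AspectRatio.
Variables (R : realType) (d n : nat) (p : 'I_n -> 'rV[R]_d).
Local Notation dist i j := (edist (p i) (p j)).

Lemma edist_le_diameter i j : dist i j <= diameter p.
Proof. by apply: (bigmax_sup i) => //; exact: le_bigmax. Qed.

Lemma min_dist_le_edist i j : i != j -> min_dist p <= dist i j.
Proof.
move=> ij; apply: (bigmin_inf i) => //.
by apply: bigmin_le_cond; rewrite eq_sym.
Qed.

Hypotheses (n_gt1 : (1 < n)%N) (p_inj : injective p).

Lemma edist_gt0 i j : i != j -> 0 < dist i j.
Proof. by move=> ij; rewrite lt_def edist_ge0 edist_eq0 (inj_eq p_inj) ij. Qed.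

Lemma diameter_gt0 : 0 < diameter p.
Proof.
have i01 : Ordinal (ltnW n_gt1) != Ordinal n_gt1 by [].
exact: lt_le_trans (edist_gt0 i01) (edist_le_diameter _ _).
Qed.

Lemma min_dist_gt0 : 0 < min_dist p.
Proof.
have D_gt0 := diameter_gt0; rewrite /min_dist.
elim/big_ind: _ => // [x y|i _]; first by rewrite lt_min => ->.
elim/big_ind: _ => // [x y|j ji]; first by rewrite lt_min => ->.
by rewrite edist_gt0 // eq_sym.
Qed.

Lemma aspect_ratio_ge1 : 1 <= aspect_ratio p.
Proof.
have i01 : Ordinal (ltnW n_gt1) != Ordinal n_gt1 by [].
rewrite /aspect_ratio ler_pdivlMr ?min_dist_gt0 // mul1r.
exact: le_trans (min_dist_le_edist i01) (edist_le_diameter _ _).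
Qed.

Lemma uncoord_graph_dyadic_cover s ord k :
  (forall e, (e \in ord) = (e.1 != e.2)) -> aspect_ratio p < 2 ^+ k.+1 ->
  forall e, e \in uncoord_graph p s ord ->
  exists j : 'I_k.+1, e \in length_class p s ord (diameter p / 2 ^+ j.+1).
Proof.
move=> ord_pairs alpha_lt e eG.
have e12 : e.1 != e.2 by rewrite -ord_pairs (uncoord_graph_subset eG).
have [j /andP[lo hi]] := exists_dyadic_class min_dist_gt0
  (min_dist_le_edist e12) (edist_le_diameter _ _) alpha_lt.
by exists j; rewrite inE eG lo hi.
Qed.

End AspectRatio.

Theorem theorem11 (d : nat) :
  exists C : nat,
  forall (R : realType) (n : nat) (p : 'I_n -> 'rV[R]_d) (s : R)
         (ord : seq ('I_n * 'I_n)) (T : {set {set 'I_n}}),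
    (1 < n)%N ->
    injective p ->
    1 < s ->
    uniq ord ->
    (forall e : 'I_n * 'I_n, (e \in ord) = (e.1 != e.2)) ->
    is_EMST p T ->
    graph_length p (uncoord_graph p s ord)
      <= C%:R * Num.max 1 (lg (aspect_ratio p)) * tree_length p T * s ^+ d.+1.
Proof.
exists (2 * (64 * class_const d ^ d))%N.
move=> R n p s ord T n_gt1 p_inj s_gt1 _ ord_pairs [[T_edges T_connected _] _].
have [k /andP[k_le k_lt]] := exists_dyadic_index (aspect_ratio_ge1 n_gt1 p_inj).
set B := (64 * class_const d ^ d)%:R * tree_length p T * s ^+ d.+1.
have B_ge0 : 0 <= B.
  by rewrite !mulr_ge0 ?tree_length_ge0 // exprn_ge0 // ltW // (lt_trans ltr01 s_gt1).
have class_le (j : 'I_k.+1) :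
    \sum_(e in length_class p s ord (diameter p / 2 ^+ j.+1)) edist (p e.1) (p e.2) <= B.
  apply: length_class_le => //.
  by rewrite divr_gt0 ?exprn_gt0 ?(diameter_gt0 n_gt1 p_inj).
have G_cover := uncoord_graph_dyadic_cover n_gt1 p_inj (s := s) ord_pairs k_lt.
rewrite /graph_length.
apply: le_trans (sum_le_sum_cover (fun e => edist_ge0 _ _) G_cover) _.
apply: le_trans (_ : _ <= \sum_(j < k.+1) B) _.
  by apply: ler_sum => j _; exact: class_le.
rewrite sumr_const card_ord -[B *+ _]mulr_natl.
rewrite (_ : _ * _ * _ * _ = 2 * Num.max 1 (lg (aspect_ratio p)) * B); last first.
  by rewrite /B natrM; ring.
by apply: ler_wpM2r => //; exact: succ_le_twice_max (lg_ge_nat k_le).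
Qed.
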